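(* Let $C\subseteq[n]$ (viewed as a single column of boxes, one box in row $i$ for each $i\in C$) and let $r_C$ be the rank function of the Schubert matroid $SM_n(C)$. Then for every subset $S\subseteq[n]$, \[r_C(S)=\max\{|\mathcal{F}|\colon \mathcal{F}\in\mathcal{F}(C,S)\}.\]
   Context: For $T=\{a_1<\cdots<a_k\}$ and $S=\{b_1<\cdots<b_k\}$ subsets of $[n]$, $T\le S$ means $\#T=\#S$ and $a_i\le b_i$ for all $i$. $SM_n(C)$ is the matroid on $[n]$ with bases $\{T\subseteq[n]\colon T\le C\}$, and $r_C(A)=\max\{\#(A\cap B)\colon B\text{ a basis}\}$. A filling of $C$ is an assignment of positive integers to some (possibly none) of the boxes of $C$; unassigned boxes are empty, and $|\mathcal{F}|$ is the number of nonempty boxes. A filling is column-strict if the integers appearing are distinct, and flagged if each integer placed in the box of row $i$ is at most $i$. $\mathcal{F}(C,S)$ is the set of column-strict flagged fillings of $C$ all of whose entries lie in $S$. *)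

(* [n] = {1,...,n} is modelled by 'I_n = {0,...,n-1};
   the element i : 'I_n stands for i+1 in [n]. *)
From mathcomp Require Import all_boot all_order.
Set Implicit Arguments. Unset Strict Implicit. Unset Printing Implicit Defensive.

Definition sorted_elems (n : nat) (T : {set 'I_n}) : seq nat :=
  sort leq [seq (val x).+1 | x <- enum T].

Definition gale_le (n : nat) (T S : {set 'I_n}) : bool :=
  (#|T| == #|S|) && all2 leq (sorted_elems T) (sorted_elems S).

Definition schubert_bases (n : nat) (C : {set 'I_n}) : {set {set 'I_n}} :=
  [set T : {set 'I_n} | gale_le T C].

Definition rankC (n : nat) (C A : {set 'I_n}) : nat :=
  \max_(B in schubert_bases C) #|A :&: B|.

(* A filling of the column C: box of row i (i : 'I_n, i.e. row i+1) holds
   Some k (positive integer k) or None (empty); boxes exist only in rows of C. *)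
Definition is_filling (n : nat) (C : {set 'I_n}) (F : 'I_n -> option nat) : Prop :=
  (forall i, i \notin C -> F i = None) /\ (forall i k, F i = Some k -> 0 < k).

Definition filling_size (n : nat) (F : 'I_n -> option nat) : nat :=
  #|[set i : 'I_n | F i != None]|.

Definition column_strict (n : nat) (F : 'I_n -> option nat) : Prop :=
  forall i j k, F i = Some k -> F j = Some k -> i = j.

Definition flagged (n : nat) (F : 'I_n -> option nat) : Prop :=
  forall i k, F i = Some k -> k <= (val i).+1.

Definition entries_in (n : nat) (S : {set 'I_n}) (F : 'I_n -> option nat) : Prop :=
  forall i k, F i = Some k -> exists2 s : 'I_n, s \in S & k = (val s).+1.

Definition in_FCS (n : nat) (C S : {set 'I_n}) (F : 'I_n -> option nat) : Prop :=
  [/\ is_filling C F, column_strict F, flagged F & entries_in S F].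

From mathcomp Require Import all_boot all_order zify.
Set Implicit Arguments. Unset Strict Implicit. Unset Printing Implicit Defensive.

(* Everything is controlled by the counts [card_below X t = #{x in X | x < t}]:
   T <= C in Gale order as soon as #T = #C and no t has more elements of C
   below it than elements of T.
   A basis B <= C pairs the i-th element of C with the i-th element of B, which
   is not larger; putting into each box of C its partner when that lies in S
   gives a filling with #(S :&: B) boxes.  Conversely, the entries of a filling
   form a set D that is the image of a subset of C under an injective map that
   never increases an element; the resulting count inequality lets D be
   completed to a basis by adding the smallest elements outside D. *)

Lemma all2_nthP (T : Type) (r : rel T) x0 (s t : seq T) : size s = size t ->
  reflect (forall i, i < size s -> r (nth x0 s i) (nth x0 t i)) (all2 r s t).
Proof.
move=> eq_st; rewrite all2E eq_st eqxx /=.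
apply: (iffP (all_nthP (x0, x0))) => h i lt_i.
  by have := h i; rewrite size_zip eq_st minnn nth_zip //; apply.
by rewrite nth_zip //; apply: h; rewrite size_zip eq_st minnn in lt_i.
Qed.

Lemma nth_lt_count_sorted (s : seq nat) i t : sorted ltn s -> i < size s ->
  (nth 0 s i < t) = (i < count (fun x => x < t) s).
Proof.
elim: s i => [|a s IH] // i /[dup] /path_sorted sorted_s.
rewrite /= (path_sortedE ltn_trans) => /andP[/allP gt_a _] lt_i.
have [lt_at | le_ta] := ltnP a t.
  by case: i lt_i => [|i] /=; rewrite ?lt_at // add1n !ltnS => /IH ->.
have ge_t x : x \in a :: s -> (x < t) = false.
  rewrite inE ltnNge => /predU1P[-> | /gt_a /ltnW le_ax]; first by rewrite le_ta.
  by rewrite (leq_trans le_ta le_ax).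
have -> : count (fun x => x < t) s = 0.
  apply/eqP; rewrite -leqn0 leqNgt -has_count.
  by apply/hasPn => x s_x; rewrite ge_t // inE s_x orbT.
by rewrite ltn0 ge_t // mem_nth.
Qed.

Section SchubertColumn.

Variable n : nat.
Implicit Types (A B C D S T W X Y : {set 'I_n}) (t : nat).

Definition card_below X t := #|[set x in X | val x < t]|.

Lemma card_below0 X : card_below X 0 = 0.
Proof. by apply: eq_card0 => x; rewrite !inE andbF. Qed.

Lemma card_below_ge X t : n <= t -> card_below X t = #|X|.
Proof.
by move=> le_nt; apply: eq_card => x; rewrite inE (leq_trans (ltn_ord x) le_nt) andbT.
Qed.

Lemma card_belowS X t (lt_tn : t < n) :
  card_below X t.+1 = card_below X t + (Ordinal lt_tn \in X).
Proof.
rewrite /card_below (cardsD1 (Ordinal lt_tn)) inE /= ltnSn andbT addnC.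
congr (_ + _); apply: eq_card => x; rewrite !inE ltnS leq_eqVlt -val_eqE /=.
by case: eqP => //= ->; rewrite ltnn andbF.
Qed.

Lemma subset_card_below X Y t : X \subset Y -> card_below X t <= card_below Y t.
Proof.
move=> sub_XY; apply/subset_leq_card/subsetP => x; rewrite !inE => /andP[X_x ->].
by rewrite (subsetP sub_XY).
Qed.

Lemma card_belowID D X t :
  card_below X t = card_below (X :&: D) t + card_below (X :\: D) t.
Proof.
rewrite /card_below -(cardsID D [set x in X | val x < t]).
by congr (_ + _); apply: eq_card => x; rewrite !inE ?andbA // andbAC.
Qed.

Lemma card_below_count X t : card_below X t = count (fun x => val x < t) (enum X).
Proof.
rewrite /card_below setIdE cardE (perm_size (enum_setI _ _)) size_filter.
by apply: eq_count => x; rewrite inE.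
Qed.


Lemma sorted_ltn_succ_enum T : sorted ltn [seq (val x).+1 | x <- enum T].
Proof.
have sub_enum : subseq (enum T) (enum 'I_n).
  by rewrite [enum 'I_n]enumT /enum_mem filter_subseq.
have sorted_val : sorted ltn [seq val x | x <- enum T].
  apply: (subseq_sorted ltn_trans (map_subseq val sub_enum)).
  by rewrite val_enum_ord iota_ltn_sorted.
by rewrite (map_comp succn val); apply: homo_sorted sorted_val.
Qed.

Lemma sorted_elemsE T : sorted_elems T = [seq (val x).+1 | x <- enum T].
Proof.
rewrite /sorted_elems sorted_sort //; first exact: leq_trans.
by move: (sorted_ltn_succ_enum T); rewrite ltn_sorted_uniq_leq => /andP[].
Qed.

Lemma sorted_ltn_sorted_elems T : sorted ltn (sorted_elems T).
Proof. by rewrite sorted_elemsE sorted_ltn_succ_enum. Qed.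

Lemma size_sorted_elems T : size (sorted_elems T) = #|T|.
Proof. by rewrite sorted_elemsE size_map cardE. Qed.

Lemma count_sorted_elems T t :
  count (fun x => x < t.+1) (sorted_elems T) = card_below T t.
Proof. by rewrite sorted_elemsE count_map card_below_count. Qed.

Lemma gale_le_refl C : gale_le C C.
Proof. by rewrite /gale_le eqxx /=; apply/(all2_nthP leq 0 erefl) => i _. Qed.

Lemma gale_le_nth T C x0 i : gale_le T C -> i < #|C| ->
  val (nth x0 (enum T) i) <= val (nth x0 (enum C) i).
Proof.
case/andP=> /eqP eq_TC; rewrite !sorted_elemsE => le_TC lt_i.
have eq_size : size [seq (val x).+1 | x <- enum T] = size [seq (val x).+1 | x <- enum C].
  by rewrite !size_map -!cardE eq_TC.
move/(all2_nthP leq 0 eq_size)/(_ i): le_TC.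
by rewrite size_map -cardE eq_TC !(nth_map x0) -?cardE ?eq_TC //; apply.
Qed.

Lemma gale_le_card_below T C : #|T| = #|C| ->
  (forall t, card_below C t <= card_below T t) -> gale_le T C.
Proof.
move=> eq_TC le_below; rewrite /gale_le eq_TC eqxx /=.
apply/(all2_nthP leq 0); first by rewrite !size_sorted_elems.
rewrite size_sorted_elems => i lt_i.
set c := nth 0 (sorted_elems C) i.
(* the i + 1 smallest elements of C lie below [c], so at least as many of T do *)
have below_C : i < card_below C c.
  rewrite -count_sorted_elems -nth_lt_count_sorted ?sorted_ltn_sorted_elems //.
  by rewrite size_sorted_elems -eq_TC.
move: (leq_trans below_C (le_below c)).
rewrite -count_sorted_elems -nth_lt_count_sorted ?sorted_ltn_sorted_elems //.
by rewrite size_sorted_elems.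
Qed.

Lemma card_below_initial W k t :
  card_below [set x in W | card_below W x < k] t = minn k (card_below W t).
Proof.
elim: t => [|t IH]; first by rewrite !card_below0 minn0.
have [lt_tn | le_nt] := ltnP t n; last first.
  have below_stable X : card_below X t.+1 = card_below X t.
    by rewrite !card_below_ge // ltnW.
  by rewrite !below_stable.
rewrite !(card_belowS _ lt_tn) IH inE /=.
by case: (Ordinal lt_tn \in W) => /=; lia.
Qed.

Lemma gale_le_extend D C :
  (forall t, card_below C t + #|D| <= #|C| + card_below D t) ->
  exists2 B, gale_le B C & D \subset B.
Proof.
move=> gap; set k := #|C| - #|D|.
have le_DC : #|D| <= #|C| by have := gap 0; rewrite !card_below0 add0n addn0.
set Y := [set x in ~: D | card_below (~: D) x < k].
exists (D :|: Y); last exact: subsetUl.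
have below_B t : card_below (D :|: Y) t = card_below D t + minn k (card_below (~: D) t).
  rewrite (card_belowID D) -card_below_initial; congr (card_below _ _ + card_below _ _).
    by apply/setIidPr/subsetUl.
  by apply/setP => x; rewrite !inE; case: (x \in D).
have below_T t : card_below D t + card_below (~: D) t = card_below [set: 'I_n] t.
  by rewrite [RHS](card_belowID D) setTI setTD.
have le_C_T t : card_below C t <= card_below [set: 'I_n] t by apply/subset_card_below/subsetT.
apply: gale_le_card_below => [|t].
  have := below_B n; have := below_T n; have := le_C_T n.
  rewrite !card_below_ge // cardsT card_ord; have := max_card C; rewrite card_ord; lia.
by rewrite below_B; have := below_T t; have := le_C_T t; have := gap t; lia.
Qed.

Lemma card_below_subset_gap A C t : A \subset C ->
  card_below C t + #|A| <= #|C| + card_below A t.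
Proof.
move=> sub_AC; rewrite (card_belowID A) (setIidPr sub_AC) -(cardsID A C) (setIidPr sub_AC).
suff : card_below (C :\: A) t <= #|C :\: A| by lia.
by apply/subset_leq_card/subsetP => x; rewrite inE => /andP[].
Qed.

Lemma card_below_imset (h : 'I_n -> 'I_n) A t :
  {in A &, injective h} -> {in A, forall a, h a <= a} ->
  card_below A t <= card_below (h @: A) t.
Proof.
move=> inj_h le_h; rewrite /card_below -(card_in_imset (f := h)); last first.
  by move=> a b; rewrite !inE => /andP[A_a _] /andP[A_b _]; apply: inj_h.
apply/subset_leq_card/subsetP => _ /imsetP[a + ->]; rewrite inE => /andP[A_a lt_at].
by rewrite inE imset_f // (leq_ltn_trans (le_h a A_a)).
Qed.

Lemma gale_le_matching T C : gale_le T C ->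
  exists g : 'I_n -> 'I_n, [/\ {in C &, injective g}, g @: C = T & {in C, forall c, g c <= c}].
Proof.
move=> gale_TC; have /andP[/eqP eq_TC _] := gale_TC.
pose g c := nth c (enum T) (index c (enum C)).
have lt_index c : c \in C -> index c (enum C) < #|C| by rewrite cardE index_mem mem_enum.
have inj_g : {in C &, injective g}.
  move=> c c' C_c C_c'; rewrite /g (set_nth_default c c') -?cardE ?eq_TC ?lt_index //.
  move/eqP; rewrite nth_uniq -?cardE ?eq_TC ?lt_index ?enum_uniq // => /eqP eq_index.
  by rewrite -(nth_index c (_ : c \in enum C)) ?eq_index ?nth_index ?mem_enum.
exists g; split => //.
  apply/eqP; rewrite eqEcard card_in_imset // eq_TC leqnn andbT.
  by apply/subsetP => _ /imsetP[c C_c ->]; rewrite -mem_enum mem_nth // -cardE eq_TC lt_index.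
move=> c C_c; have := gale_le_nth c gale_TC (lt_index c C_c).
by rewrite nth_index // mem_enum.
Qed.

Lemma filling_of_matching C S (g : 'I_n -> 'I_n) :
  {in C &, injective g} -> {in C, forall c, g c <= c} ->
  exists2 F, in_FCS C S F & filling_size F = #|S :&: g @: C|.
Proof.
move=> inj_g le_g.
exists (fun c => if (c \in C) && (g c \in S) then Some (g c).+1 else None).
  split.
  - by split=> [c /negbTE -> // | c k]; case: ifP => // _ [<-].
  - move=> c c' k; case: ifP => // /andP[C_c _] [<-].
    by case: ifP => // /andP[C_c' _] [/val_inj/esym/inj_g]; apply.
  - by move=> c k; case: ifP => // /andP[C_c _] [<-]; rewrite ltnS le_g.
  - by move=> c k; case: ifP => // /andP[_ S_gc] [<-]; exists (g c).
rewrite /filling_size -(card_in_imset (f := g)) => [|c c']; last first.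
  rewrite !inE; case: ifP => // /andP[C_c _] _.
  by case: ifP => // /andP[C_c' _] _; apply: inj_g.
apply: eq_card => x; rewrite inE; apply/imsetP/andP => [[c] | [S_x /imsetP[c C_c eq_x]]].
  by rewrite inE; case: ifP => // /andP[C_c S_gc] _ ->; rewrite imset_f.
by exists c; rewrite // inE C_c -eq_x S_x.
Qed.

Lemma in_FCS_entries C S F : in_FCS C S F ->
  exists h : 'I_n -> 'I_n, [/\ [set i | F i != None] \subset C,
    {in [set i | F i != None] &, injective h}, h @: [set i | F i != None] \subset S
    & {in [set i | F i != None], forall i, h i <= i}].
Proof.
case=> [[outside_C _] strict flag entries].
(* the entry [k] of a box is the element [k - 1] of ['I_n] *)
pose h i := insubd i (odflt 0 (F i)).-1.
have entry_h i : F i != None -> [/\ F i = Some (val (h i)).+1, h i \in S & h i <= i].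
  case E: (F i) => [k|] // _; have [s S_s eq_k] := entries i k E.
  have -> : h i = s by apply: val_inj; rewrite /h E val_insubd eq_k ltn_ord.
  by rewrite -eq_k -ltnS -eq_k; split=> //; apply: flag E.
exists h; split.
- by apply/subsetP => i; rewrite inE; apply: contraR => /outside_C ->.
- move=> i j; rewrite !inE => /entry_h[F_i _ _] /entry_h[F_j _ _] eq_h.
  by apply: strict F_i _; rewrite F_j eq_h.
- by apply/subsetP => _ /imsetP[i + ->]; rewrite inE => /entry_h[].
- by move=> i; rewrite inE => /entry_h[].
Qed.

Lemma leq_rankC C S B : gale_le B C -> #|S :&: B| <= rankC C S.
Proof.
by move=> gale_BC; apply: (leq_bigmax_cond (F := fun B => #|S :&: B|)); rewrite inE.
Qed.

Lemma rankC_attained C S : exists2 B, gale_le B C & rankC C S = #|S :&: B|.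
Proof.
have bases_gt0 : 0 < #|schubert_bases C|.
  by apply/card_gt0P; exists C; rewrite inE gale_le_refl.
have [B] := eq_bigmax_cond (fun B => #|S :&: B|) bases_gt0.
by rewrite inE; exists B.
Qed.

Lemma filling_size_le_rankC C S F : in_FCS C S F -> filling_size F <= rankC C S.
Proof.
move=> /in_FCS_entries[h [sub_C inj_h sub_S le_h]].
have [B gale_BC sub_B] : exists2 B, gale_le B C & h @: [set i | F i != None] \subset B.
  apply: gale_le_extend => t; rewrite card_in_imset //.
  apply: leq_trans (card_below_subset_gap t sub_C) _.
  by rewrite leq_add2l card_below_imset.
rewrite /filling_size -(card_in_imset inj_h) (leq_trans _ (leq_rankC S gale_BC)) //.
by rewrite subset_leq_card // subsetI sub_S.
Qed.

End SchubertColumn.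

Theorem theorem3p4 (n : nat) (C S : {set 'I_n}) :
  (exists F : 'I_n -> option nat, in_FCS C S F /\ filling_size F = rankC C S) /\
  (forall F : 'I_n -> option nat, in_FCS C S F -> filling_size F <= rankC C S).
Proof.
split; last exact: filling_size_le_rankC.
have [B gale_BC ->] := rankC_attained C S.
have [g [inj_g <- le_g]] := gale_le_matching gale_BC.
have [F FCS_F size_F] := filling_of_matching S inj_g le_g.
by exists F.
Qed.
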